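(* Let $y\ge 1$ and $m\ge 2$ be integers. Consider the random walk $(X_t)_{t\ge 0}$ on $\mathbb{Z}$ with $X_0=m-1$ whose steps are independent and equal to $+y$ or $-1$, each with probability $\tfrac12$, stopped at the first time $\tau$ at which $X_\tau\in\{0\}\cup\{m,m+1,\dots,m+y-1\}$. For $k\ge 0$ let $\ell_k$ be the probability that $\tau<\infty$, $X_\tau=0$, and exactly $k$ of the first $\tau$ steps are $+y$ steps, and set $$p_l(z)=\sum_{k\ge 0}\ell_k\, z^{yk}.$$ For an integer $k$ define $$u[y,k](z)=\sum_{\substack{n\ge 0\\ (y+1)n-k<0}}\frac{z^{yn}}{2^{(y+1)n+1-k}}\binom{(y+1)n-k}{n}.$$ Then, as formal power series in $z$ (equivalently, as analytic functions for $|z|$ small), $$p_l(z)=\frac{1}{u[y,m](z)}.$$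
   Context: For an integer $a$ (possibly negative) and $n\ge 0$, $\binom{a}{n}=a(a-1)\cdots(a-n+1)/n!$. The sum defining $u[y,k]$ is finite, and is $0$ when it is empty. Before absorption the walk stays in $\{1,\dots,m-1\}$, so a $+y$ step from there lands in $\{2,\dots,m+y-1\}$ and the walk cannot jump over the right absorbing set $\{m,\dots,m+y-1\}$. Equivalently, $p_l(z)=z^{-(m-1)}\sum_j P(X_\tau=0,\ \text{exactly } j \text{ steps are } -1)\,z^j$, i.e. $z$ marks backward steps, normalized by the minimal number $m-1$ of backward steps. (This is the probability of being absorbed at the left barrier $0$, for a walk started next to the right barrier.) *)

From HB Require Import structures.
From mathcomp Require Import all_boot all_order all_algebra.
From mathcomp Require Import all_classical all_reals all_analysis.
Set Implicit Arguments. Unset Strict Implicit. Unset Printing Implicit Defensive.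
Import Order.TTheory GRing.Theory Num.Theory.
Import numFieldNormedType.Exports.
Local Open Scope ring_scope.

(* A step sequence: true = step +y, false = step -1. *)
Definition pos (y m : nat) (s : seq bool) (j : nat) : int :=
  (m.-1)%:Z + (y * count id (take j s))%:Z - (count (fun b => ~~ b) (take j s))%:Z.

Definition absorbing (y m : nat) (x : int) : bool :=
  (x == 0) || ((m%:Z <= x) && (x <= (m + y).-1%:Z)).

(* The event, determined by the first t steps s (size t):
   tau = t, X_tau = 0, and exactly k of the first tau steps are +y. *)
Definition event (y m k : nat) (s : seq bool) : bool :=
  [forall j : 'I_(size s), ~~ absorbing y m (pos y m s j)] &&
  (pos y m s (size s) == 0) && (count id s == k).

(* P(tau = t, X_tau = 0, exactly k up-steps): fair independent steps. *)
Definition ell_t {R : realType} (y m k t : nat) : R :=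
  #|[pred s : t.-tuple bool | event y m k s]|%:R / 2%:R ^+ t.

Definition ell {R : realType} (y m k : nat) : R :=
  limn (series (fun t => @ell_t R y m k t)).

Definition pl_coef {R : realType} (y m i : nat) : R :=
  if (y %| i)%N then @ell R y m (i %/ y) else 0.

Definition gbinom {R : realType} (a : int) (n : nat) : R :=
  (\prod_(i < n) (a - i%:Z)%:~R) / (n`!)%:R.

Definition u_coef {R : realType} (y : nat) (k : int) (i : nat) : R :=
  if (y %| i)%N && (((y.+1 * (i %/ y))%N%:Z - k) < 0)
  then @gbinom R ((y.+1 * (i %/ y))%N%:Z - k) (i %/ y) /
       (2%:R : R) ^ ((y.+1 * (i %/ y)).+1%:Z - k)
  else 0.

From mathcomp Require Import all_boot all_order all_algebra.
From mathcomp Require Import all_classical all_reals all_analysis.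
From mathcomp Require Import zify ring.
Import Order.TTheory GRing.Theory Num.Theory.
Import numFieldNormedType.Exports.
Local Open Scope ring_scope.

(* Let P(x, k) count the walks from x with k up-steps that avoid the absorbing
   set until they stop at 0; they have length x + (y+1)k and satisfy
   P(x, k) = P(x-1, k) + P(x+y, k-1) for 0 < x < m, with P(0, k) = [k = 0] and
   P(x, k) = 0 for m <= x < m + y.  Up to powers of 2, the coefficients of
   u[y,m] are b_n = (-1)^n C(m-1-yn, n).  The convolution
   E(x, K) = sum_k P(x, k) b_(K-k) obeys the same recurrence in (x, K), and so
   does H(x, K) = [x < m] (-1)^K C(m-1-x-yK, K), by Pascal's rule; both equal
   b_K at x = 0 and vanish on the right barrier, hence E = H.  At x = m - 1
   this reads sum_k P(m-1, k) b_(K-k) = [K = 0], which is p_l u[y,m] = 1 once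
   the powers of 2 are collected. *)

Lemma forall_ordS n (P : nat -> bool) :
  [forall j : 'I_n.+1, P j] = P 0%N && [forall j : 'I_n, P j.+1].
Proof.
apply/forallP/andP => [H|[H0 H]].
  by split; [exact: (H ord0) | apply/forallP => j; exact: (H (lift ord0 j))].
by case=> [[|j] lt_j_n] //=; exact: (forallP H (Ordinal (lt_j_n : (j < n)%N))).
Qed.

Lemma card_tuple_nil {T : finType} (P : pred (seq T)) :
  #|[pred s : 0.-tuple T | P s]| = P [::].
Proof.
rewrite (@eq_card _ _ (fun _ : 0.-tuple T => P [::])) => [|s]; last by rewrite !inE tuple0.
by case: (P [::]); rewrite ?card0 // -[LHS]/#|{: 0.-tuple T}| card_tuple.
Qed.

Lemma card_tuple_cons {T : finType} (P : pred (seq T)) t :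
  #|[pred s : t.+1.-tuple T | P s]| =
  (\sum_(x : T) #|[pred s : t.-tuple T | P (x :: s)]|)%N.
Proof.
rewrite -sum1_card (reindex (fun p : T * t.-tuple T => cons_tuple p.1 p.2)) /=.
  under [RHS]eq_bigr do rewrite -sum1_card.
  by rewrite pair_big_dep; apply: eq_bigl => -[x s]; rewrite !inE.
exists (fun s => (thead s, behead_tuple s)) => [[x s] | s] _ /=.
  by congr pair; apply: val_inj.
by rewrite [RHS]tuple_eta; apply: val_inj.
Qed.

Lemma binS_subn_mul y j K : (0 < y)%N ->
  'C(j.+1 - y * K.+1, K.+1) =
  ('C(j - y * K.+1, K.+1) + (if (y <= j)%N then 'C(j - y * K.+1, K) else 0))%N.
Proof.
move=> y_gt0; case: (leqP (y * K.+1) j) => [le_yK_j | lt_j_yK].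
  by rewrite subSn // binS (leq_trans _ le_yK_j) // leq_pmulr.
have -> : (j.+1 - y * K.+1 = 0)%N by lia.
have -> : (j - y * K.+1 = 0)%N by lia.
case: K lt_j_yK => [|K] lt_j_yK; last by rewrite !bin0n; case: ifP.
by rewrite muln1 in lt_j_yK; rewrite ifN // -ltnNge.
Qed.

Lemma prod_addn_ffact a n : (\prod_(i < n) (a.+1 + i) = (a + n) ^_ n)%N.
Proof.
rewrite ffact_prod (reindex_inj rev_ord_inj) /=; apply: eq_bigr => i _.
have := ltn_ord i; lia.
Qed.

Lemma gbinomN (R : realType) a n :
  @gbinom R (- a.+1%:Z) n = (-1) ^+ n * 'C(a + n, n)%:R.
Proof.
rewrite /gbinom; under eq_bigr do rewrite -opprD -PoszD intrN.
rewrite prodrN card_ord -natr_prod prod_addn_ffact -bin_ffact natrM mulrA mulfK //.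
Qed.

Lemma ndvdn_between y k i : (y * k < i < y * k.+1)%N -> ~~ (y %| i)%N.
Proof.
case/andP=> lo hi; rewrite -(subnKC (ltnW lo)) dvdn_addr ?dvdn_mulr // gtnNdvd //.
  by rewrite subn_gt0.
by rewrite mulnS in hi; lia.
Qed.

Lemma sum_nat_dvdn {V : nmodType} y (F : nat -> V) K : (0 < y)%N ->
  \sum_(0 <= i < (K * y).+1) (if (y %| i)%N then F (i %/ y)%N else 0) =
  \sum_(0 <= k < K.+1) F k.
Proof.
move=> y_gt0; elim: K => [|K IH]; first by rewrite mul0n !big_nat1 dvdn0 div0n.
rewrite (big_cat_nat _ (n := (K * y).+1)) //=; last by rewrite ltnS leq_mul2r leqnSn orbT.
rewrite IH [RHS]big_nat_recr //=; congr (_ + _).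
rewrite (big_nat_recr (K.+1 * y)) /=; last by rewrite mulSn; lia.
rewrite dvdn_mull // mulnK // big_nat_cond big1 ?add0r // => i /andP[/andP[lo hi] _].
by rewrite ifN //; apply: (ndvdn_between _ K); rewrite mulnS; lia.
Qed.

Lemma sum_mul_dvdn {R : pzSemiRingType} y (f g : nat -> R) N : (0 < y)%N ->
  \sum_(i < N.+1) (if (y %| i)%N then f (i %/ y)%N else 0) *
                  (if (y %| N - i)%N then g ((N - i) %/ y)%N else 0) =
  if (y %| N)%N then \sum_(k < (N %/ y).+1) f k * g (N %/ y - k)%N else 0.
Proof.
move=> y_gt0; case: ifPn => [/dvdnP[K ->] | ndvdN]; last first.
  rewrite big1 // => i _; case: ifPn => [dvd_i | _]; last by rewrite mul0r.
  rewrite ifN ?mulr0 //; apply: contra ndvdN => dvd_Ni.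
  by rewrite -(subnK (_ : i <= N)%N) ?dvdn_add // -ltnS.
rewrite mulnK // -(big_mkord xpredT (fun k => f k * g (K - k)%N)) -(sum_nat_dvdn y) // big_mkord.
apply: eq_bigr => -[i /= le_i_N] _; case: ifPn => [/dvdnP[k ->] | _]; last by rewrite mul0r.
by rewrite -mulnBl dvdn_mull // !mulnK.
Qed.

Section Walk.
Variables y m : nat.

Fixpoint absorbed0 (x : int) (k : nat) (s : seq bool) : bool :=
  match s with
  | [::] => (x == 0) && (k == 0)%N
  | b :: s' => ~~ absorbing y m x &&
      (if b then (0 < k)%N && absorbed0 (x + y%:Z) k.-1 s' else absorbed0 (x - 1) k s')
  end.

(* [pos y m] is convertible to [walk_pos m.-1]. *)
Definition walk_pos (x : int) (s : seq bool) (j : nat) : int :=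
  x + (y * count id (take j s))%:Z - (count (fun b => ~~ b) (take j s))%:Z.

Lemma walk_pos0 x s : walk_pos x s 0 = x.
Proof. by rewrite /walk_pos take0 /= muln0 subr0 addr0. Qed.

Lemma walk_posS x b s j :
  walk_pos x (b :: s) j.+1 = walk_pos (x + (if b then y%:Z else -1)) s j.
Proof.
rewrite /walk_pos /=; case: b => /=; rewrite ?mulnDr ?muln1 ?add0n ?add1n.
  by rewrite PoszD; ring.
by rewrite -addn1 PoszD; ring.
Qed.

Lemma absorbed0E x k s : absorbed0 x k s =
  [forall j : 'I_(size s), ~~ absorbing y m (walk_pos x s j)] &&
  (walk_pos x s (size s) == 0) && (count id s == k).
Proof.
elim: s x k => [|b s IH] x k /=.
  have -> : [forall j : 'I_0, ~~ absorbing y m (walk_pos x [::] j)] by apply/forallP => -[].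
  by rewrite walk_pos0 /= [(0%N == _)]eq_sym.
rewrite (forall_ordS _ (fun j => ~~ absorbing y m (walk_pos x (b :: s) j))) /=.
rewrite walk_pos0 walk_posS; under eq_forallb => j do rewrite walk_posS.
case: (absorbing y m x) => //=; case: b => /=; rewrite IH //.
by case: k => [|k] /=; rewrite ?andbF // eqSS andbA.
Qed.

Lemma size_absorbed0 x k s : absorbed0 x k s -> (size s)%:Z = x + (y.+1 * k)%N%:Z.
Proof.
elim: s x k => [|[] s IH] x k /=; first by case/andP => /eqP -> /eqP ->; rewrite muln0.
  by case: k => [|k] /andP[_] //= /IH; rewrite mulnS; lia.
by case/andP => _ /IH; lia.
Qed.

Definition nwalks (x : int) (k t : nat) : nat :=
  #|[pred s : t.-tuple bool | absorbed0 x k s]|.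

Lemma nwalks0 x k : nwalks x k 0 = ((x == 0) && (k == 0)%N) :> nat.
Proof. exact: (card_tuple_nil (absorbed0 x k)). Qed.

Lemma nwalksS x k t : nwalks x k t.+1 = if absorbing y m x then 0%N else
  (nwalks (x - 1) k t + (if k is k'.+1 then nwalks (x + y%:Z) k' t else 0))%N.
Proof.
rewrite /nwalks (card_tuple_cons (absorbed0 x k)) big_bool /=.
case: (absorbing y m x) => /=; first by rewrite !eq_card0.
rewrite addnC; case: k => [|k] //; congr (_ + _); exact: eq_card0.
Qed.

Lemma nwalks_eq0 x k t : t%:Z != x + (y.+1 * k)%N%:Z -> nwalks x k t = 0%N.
Proof.
move=> t_neq; apply: eq_card0 => s; rewrite !inE; apply: contraNF t_neq.
by move/size_absorbed0 <-; rewrite size_tuple.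
Qed.

Lemma card_event k t :
  #|[pred s : t.-tuple bool | event y m k s]| = nwalks m.-1 k t.
Proof. by apply: eq_card => s; rewrite !inE absorbed0E. Qed.

Definition npaths (x k : nat) : nat := nwalks x k (x + y.+1 * k).

Lemma absorbing_nat (x : nat) :
  absorbing y m x = (x == 0)%N || (m <= x < m + y)%N.
Proof.
rewrite /absorbing; case: (x =P 0)%N => [-> | x_neq0] //=.
have -> : (x%:Z == 0) = false by apply/eqP; lia.
by apply/andP/andP => -[lo hi]; split; lia.
Qed.

Lemma npaths0 k : npaths 0 k = (k == 0)%N.
Proof.
rewrite /npaths add0n; case: k => [|k]; first by rewrite muln0 nwalks0.
by rewrite mulnS addSn nwalksS absorbing_nat.
Qed.

Lemma npaths_rec x k : (0 < x < m)%N ->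
  npaths x k = (npaths x.-1 k + (if k is k'.+1 then npaths (x + y) k' else 0))%N.
Proof.
move=> x_range; rewrite /npaths.
have -> : (x + y.+1 * k = (x.-1 + y.+1 * k).+1)%N by lia.
rewrite nwalksS absorbing_nat ifN; last by apply/norP; split; lia.
have -> : x%:Z - 1 = x.-1 by lia.
case: k => [|k] //; have -> : (x.-1 + y.+1 * k.+1 = x + y + y.+1 * k)%N by rewrite mulnS; lia.
by rewrite PoszD.
Qed.

Hypotheses (y_gt0 : (0 < y)%N) (m_gt0 : (0 < m)%N).

Lemma npaths_barrier x k : (m <= x < m + y)%N -> npaths x k = 0%N.
Proof.
move=> x_range; rewrite /npaths.
have -> : (x + y.+1 * k = (x.-1 + y.+1 * k).+1)%N by lia.
by rewrite nwalksS absorbing_nat x_range orbT.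
Qed.

Section Convolution.
Variable R : comPzRingType.

Definition ubin (n : nat) : R := (-1) ^+ n * 'C(m.-1 - y * n, n)%:R.

Definition ubin_from (x K : nat) : R :=
  if (x < m)%N then (-1) ^+ K * 'C(m.-1 - x - y * K, K)%:R else 0.

Definition paths_conv (x K : nat) : R :=
  \sum_(k < K.+1) (npaths x k)%:R * ubin (K - k).

Lemma paths_conv0 K : paths_conv 0 K = ubin K.
Proof.
rewrite /paths_conv big_ord_recl npaths0 mul1r subn0 big1 ?addr0 // => i _.
by rewrite npaths0 mul0r.
Qed.

Lemma paths_conv_rec x K : (0 < x < m)%N ->
  paths_conv x K = paths_conv x.-1 K + (if K is K'.+1 then paths_conv (x + y) K' else 0).
Proof.
move=> x_range; rewrite /paths_conv.
under eq_bigr do rewrite npaths_rec // natrD mulrDl.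
rewrite big_split /=; congr (_ + _).
case: K => [|K]; first by rewrite big_ord1 mul0r.
by rewrite big_ord_recl mul0r add0r.
Qed.

Lemma paths_conv_barrier x K : (m <= x < m + y)%N -> paths_conv x K = 0.
Proof.
by move=> x_range; rewrite /paths_conv big1 // => k _; rewrite npaths_barrier // mul0r.
Qed.

Lemma ubin_from0 K : ubin_from 0 K = ubin K.
Proof. by rewrite /ubin_from m_gt0 subn0. Qed.

Lemma ubin_from_barrier x K : (m <= x)%N -> ubin_from x K = 0.
Proof. by move=> le_m_x; rewrite /ubin_from ltnNge le_m_x. Qed.

Lemma ubin_from_rec x K : (0 < x < m)%N ->
  ubin_from x K = ubin_from x.-1 K + (if K is K'.+1 then ubin_from (x + y) K' else 0).
Proof.
move=> x_range; rewrite /ubin_from !ifT; try lia.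
have -> : (m.-1 - x.-1 = (m.-1 - x).+1)%N by lia.
case: K => [|K]; first by rewrite !bin0 addr0.
rewrite binS_subn_mul // natrD mulrDr.
have -> : (x + y < m)%N = (y <= m.-1 - x)%N by apply/idP/idP; lia.
have -> : (m.-1 - (x + y) - y * K = m.-1 - x - y * K.+1)%N by rewrite mulnS; lia.
by case: ifP => _; rewrite ?mulr0 ?addr0 // exprS; ring.
Qed.

Lemma paths_conv_ubin_from x K : (x < m + y)%N -> paths_conv x K = ubin_from x K.
Proof.
elim: K x => [|K IHK] x lt_x_my; have [le_m_x | lt_x_m] := leqP m x;
  try by rewrite paths_conv_barrier ?ubin_from_barrier // le_m_x.
all: elim: x lt_x_my lt_x_m => [|x IHx] lt_x_my lt_x_m; first by rewrite paths_conv0 ubin_from0.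
all: have x_range : (0 < x.+1 < m)%N by [].
all: rewrite paths_conv_rec // ubin_from_rec //= IHx //; try lia.
by rewrite IHK //; lia.
Qed.

Lemma paths_conv_start K : paths_conv m.-1 K = (K == 0)%:R.
Proof.
rewrite paths_conv_ubin_from /ubin_from; last by lia.
rewrite ifT; last by lia.
by rewrite subnn sub0n; case: K => [|K]; rewrite ?bin0 ?bin0n ?mulr1 ?mulr0.
Qed.

End Convolution.

Section Series.
Variable R : realType.

Lemma two_exp_neq0 q : (2%:R : R) ^+ q != 0.
Proof. by rewrite expf_neq0 // pnatr_eq0. Qed.

Lemma ell_npaths k : @ell R y m k = (npaths m.-1 k)%:R / 2%:R ^+ (m.-1 + y.+1 * k).
Proof.
rewrite /ell; apply: lim_near_cst; first exact: Rhausdorff.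
exists (m.-1 + y.+1 * k).+1 => // n /= lt_len_n.
rewrite /series /= big_mkord (bigD1 (Ordinal lt_len_n)) //= big1 ?addr0.
  by rewrite /ell_t card_event.
move=> i ne_i_len; rewrite /ell_t card_event.
by rewrite nwalks_eq0 ?mul0r //; apply: contra ne_i_len => /eqP ?; apply/eqP/val_inj; lia.
Qed.

Lemma u_coef_ubin n :
  @u_coef R y m%:Z (y * n) = ubin R n * 2%:R ^+ m.-1 / 2%:R ^+ (y.+1 * n).
Proof.
rewrite /u_coef dvdn_mulr // mulKn //=.
case: (ltnP (y.+1 * n) m) => [lt_yn_m | le_m_yn]; last first.
  rewrite ifF; last by apply/negbTE; rewrite -leNgt; lia.
  by rewrite /ubin bin_small ?mulr0 ?mul0r //; rewrite mulSn in le_m_yn; lia.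
rewrite ifT; last by lia.
have -> : (y.+1 * n)%N%:Z - m%:Z = - (m.-1 - y.+1 * n).+1%:Z by lia.
have -> : ((y.+1 * n).+1)%N%:Z - m%:Z = - (m.-1 - y.+1 * n)%:Z by lia.
rewrite gbinomN -exprnN invrK.
have -> : (m.-1 - y.+1 * n + n = m.-1 - y * n)%N by rewrite mulSn; lia.
rewrite -/(ubin R n) {2}(_ : m.-1 = m.-1 - y.+1 * n + y.+1 * n)%N; last by lia.
by rewrite exprD mulrA mulfK ?two_exp_neq0.
Qed.

Lemma cauchy_ell_u_coef K :
  \sum_(k < K.+1) @ell R y m k * u_coef y m%:Z (y * (K - k)) = (K == 0)%:R.
Proof.
transitivity (paths_conv R m.-1 K / 2%:R ^+ (y.+1 * K)); last first.
  by rewrite paths_conv_start; case: K => [|K]; rewrite ?mul0r // muln0 expr0 divr1.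
rewrite /paths_conv mulr_suml; apply: eq_bigr => -[k /= lt_k_K] _.
rewrite ell_npaths u_coef_ubin.
have -> : (y.+1 * K = y.+1 * k + y.+1 * (K - k))%N by rewrite -mulnDr subnKC // -ltnS.
by rewrite !exprD; field; rewrite !two_exp_neq0.
Qed.

End Series.
End Walk.

Theorem mainTheorem1 (R : realType) (y m : nat) :
  (1 <= y)%N -> (2 <= m)%N ->
  forall N : nat,
    \sum_(i < N.+1) (@pl_coef R y m i * @u_coef R y m%:Z (N - i)%N)
    = (N == 0)%:R.
Proof.
move=> y_gt0 m_ge2 N; have m_gt0 : (0 < m)%N by lia.
have u_coefE i : @u_coef R y m i = if (y %| i)%N then u_coef y m (y * (i %/ y)) else 0.
  by case: ifPn => [/dvdnP[n ->] | ndvd]; [rewrite mulnK // mulnC | rewrite /u_coef (negbTE ndvd)].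
under eq_bigr do rewrite u_coefE.
rewrite (sum_mul_dvdn y (@ell R y m) (fun n => u_coef y m%:Z (y * n))) //.
case: ifPn => [/dvdnP[K ->] | ndvd].
  by rewrite mulnK // cauchy_ell_u_coef // muln_eq0 (gtn_eqF y_gt0) orbF.
by case: N ndvd => [|N]; rewrite ?dvdn0.
Qed.
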